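(* Let $G$ be an optimal digraph on $n$ vertices. Then $$\frac{3n}{4} - \frac{1}{2} - \frac{\epsilon_G}{4} < \alpha_G + \beta_G < \frac{3n}{4} + \frac{1}{2} + \frac{\epsilon_G}{4}.$$ Moreover, if some vertex is incident with a longest edge but with no shortest non-edge, then $\alpha_G + \beta_G < 3n/4 + \epsilon_G/4$; and if some vertex is incident with a shortest non-edge but with no longest edge, then $\alpha_G + \beta_G > 3n/4 - \epsilon_G/4$.
   Context: Digraphs are finite, loopless, with at most one edge $uv$ per ordered pair. A digraph is $2$-free if no distinct $u,v$ have both $uv,vu$ as edges. A circular interval digraph is a digraph together with a fixed arrangement of its vertices in a circle such that for all distinct $u,v,w$ in clockwise order with $uw\in E(G)$, also $uv,vw\in E(G)$. For distinct $u,v$, $d(u,v) = 1 + |\{w: u,w,v \text{ distinct, in clockwise order}\}|$; this is the length of the ordered pair $uv$. A non-edge is an ordered pair $(u,v)$ of distinct vertices with neither $uv$ nor $vu$ an edge; its length is $d(u,v)$. $\alpha_G$ is the minimum length of a non-edge ($\infty$ if none) and $\beta_G$ the maximum length of an edge ($0$ if none). A longest edge is an edge of length $\beta_G$; a shortest non-edge is a non-edge of length $\alpha_G$. A vertex $x$ is incident with a pair $(u,v)$ if $x\in\{u,v\}$. $\epsilon_G=0$ if $\beta_G>\alpha_G$ and $\epsilon_G=1$ if $\beta_G\le\alpha_G$. $\xi(G)$ is the number of pairs $(uv,(w,x))$ with $uv\in E(G)$, $(w,x)$ a non-edge, $d(u,v)>d(w,x)$. $\tilde P_3(G)$ is the number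 of triples $(a,b,c)$ of distinct vertices with $ab,bc\in E(G)$ and $ac,ca\notin E(G)$. For fixed $n\ge 4$, $G$ is optimal if it is a $2$-free circular interval digraph on $n$ vertices maximizing $\tilde P_3$ among all such digraphs and, subject to this, minimizing $\xi(G)$. *)

From mathcomp Require Import all_boot all_order all_algebra.
Set Implicit Arguments. Unset Strict Implicit. Unset Printing Implicit Defensive.

(* Digraphs on n vertices with a fixed circular arrangement: vertices are 'I_n,
   arranged clockwise in the order 0, 1, ..., n-1.  A digraph is a relation E. *)

(* length d(u,v) = 1 + #{w strictly between u and v clockwise} = (v - u) mod n *)
Definition dist n (u v : 'I_n) : nat := (v + n - u) %% n.

Definition cw n (u v w : 'I_n) : bool :=
  [&& u != v, v != w, u != w & dist u v < dist u w].

Definition loopless n (E : rel 'I_n) : Prop := forall u, ~~ E u u.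

Definition two_free n (E : rel 'I_n) : Prop :=
  forall u v, u != v -> ~~ (E u v && E v u).

Definition circ_interval n (E : rel 'I_n) : Prop :=
  forall u v w, cw u v w -> E u w -> E u v && E v w.

Definition cid2 n (E : rel 'I_n) : Prop :=
  [/\ loopless E, two_free E & circ_interval E].

Definition nonedge n (E : rel 'I_n) (u v : 'I_n) : bool :=
  [&& u != v, ~~ E u v & ~~ E v u].

Definition xi n (E : rel 'I_n) : nat :=
  #|[set p : ('I_n * 'I_n) * ('I_n * 'I_n) |
      [&& E p.1.1 p.1.2, nonedge E p.2.1 p.2.2 &
          dist p.2.1 p.2.2 < dist p.1.1 p.1.2]]|.

Definition P3 n (E : rel 'I_n) : nat :=
  #|[set t : 'I_n * 'I_n * 'I_n |
      [&& t.1.1 != t.1.2, t.1.2 != t.2, t.1.1 != t.2,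
          E t.1.1 t.1.2, E t.1.2 t.2, ~~ E t.1.1 t.2 & ~~ E t.2 t.1.1]]|.

Definition optimal n (E : rel 'I_n) : Prop :=
  [/\ cid2 E,
      (forall E' : rel 'I_n, cid2 E' -> P3 E' <= P3 E) &
      (forall E' : rel 'I_n, cid2 E' -> P3 E' = P3 E -> xi E <= xi E')].

(* alpha_G : minimum length of a non-edge; None encodes infinity *)
Definition alphaG n (E : rel 'I_n) : option nat :=
  if [exists p : 'I_n * 'I_n, nonedge E p.1 p.2]
  then Some (\big[minn/n]_(p : 'I_n * 'I_n | nonedge E p.1 p.2) dist p.1 p.2)
  else None.

(* beta_G : maximum length of an edge; 0 if none *)
Definition betaG n (E : rel 'I_n) : nat :=
  \max_(p : 'I_n * 'I_n | E p.1 p.2) dist p.1 p.2.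

(* epsilon_G = 0 if beta > alpha, 1 if beta <= alpha (alpha = infinity gives 1) *)
Definition epsG n (E : rel 'I_n) : nat :=
  match alphaG E with
  | Some a => if a < betaG E then 0 else 1
  | None => 1
  end.

Definition incident n (x u v : 'I_n) : bool := (x == u) || (x == v).

Definition on_longest_edge n (E : rel 'I_n) (x : 'I_n) : Prop :=
  exists u v, [&& E u v, dist u v == betaG E & incident x u v].

Definition on_shortest_nonedge n (E : rel 'I_n) (x : 'I_n) : Prop :=
  exists u v, [/\ nonedge E u v, alphaG E = Some (dist u v) & incident x u v].

From mathcomp Require Import all_boot all_order all_algebra.
From mathcomp Require Import zify lra.
Import Order.TTheory.

Set Implicit Arguments. Unset Strict Implicit. Unset Printing Implicit Defensive.

(* In a
   2-free circular interval digraph every out-neighbourhood is an arc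
   following its vertex and every in-neighbourhood an arc preceding it
   (out_nbhd_arc, in_nbhd_arc).  Optimality is tested against two local
   modifications: deleting a longest edge u -> v and adding a shortest
   non-edge u -> v both keep the class (del_edge_cid2, add_edge_cid2), and
   the change in the number P3 of induced 2-paths is governed by
   x = |N+(v)|, y = |N-(u)| and w = |N+(v) & N-(u)| (del_edge_P3,
   add_edge_P3); when alpha < beta they also decrease xi, which makes the
   optimality inequalities strict.  Since both neighbourhoods lie on the
   open arc from v to u, whose size is known, and the first vertex past
   each neighbourhood spans a non-edge, the inequalities on x, y, w turn
   into linear bounds on alpha + beta (shortest_nonedge_bound,
   longest_edge_bound).  The directed cycle, which has n induced paths,
   rules out the degenerate case alpha = 1 >= beta. *)

Section CircularDistance.
Variable n : nat.
Implicit Types u v w : 'I_n.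

Lemma distE u v : dist u v = if u <= v then v - u else v + n - u.
Proof.
rewrite /dist; have hu := ltn_ord u; have hv := ltn_ord v.
case: leqP => h; last by rewrite modn_small //; lia.
have -> : v + n - u = (v - u) + n by lia.
by rewrite modnDr modn_small //; lia.
Qed.

Lemma dist_lt u v : dist u v < n.
Proof. by rewrite distE; have := ltn_ord u; have := ltn_ord v; case: (leqP u v); lia. Qed.

Lemma dist_eq0 u v : (dist u v == 0) = (u == v).
Proof.
rewrite distE -val_eqE /=; have := ltn_ord u; have := ltn_ord v.
by case: (leqP u v) => h1 h2 h3; apply/idP/idP; lia.
Qed.

Lemma dist_gt0 u v : u != v -> 0 < dist u v.
Proof. by rewrite -dist_eq0 lt0n. Qed.

Lemma dist_xx u : dist u u = 0.
Proof. by apply/eqP; rewrite dist_eq0. Qed.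

Lemma dist_turn u v : u != v -> dist u v + dist v u = n.
Proof.
rewrite !distE -val_eqE /=; have := ltn_ord u; have := ltn_ord v.
by case: (leqP u v); case: (leqP v u); lia.
Qed.

Lemma dist_via u v w :
  (dist u v <= dist u w /\ dist u v + dist v w = dist u w) \/
  (dist u w < dist u v /\ dist u v + dist v w = dist u w + n).
Proof.
rewrite !distE; have := ltn_ord u; have := ltn_ord v; have := ltn_ord w.
by case: (leqP u v); case: (leqP v w); case: (leqP u w); lia.
Qed.

Lemma dist_injl v : injective (dist v).
Proof.
move=> a b; rewrite !distE => h; apply/val_inj => /=.
by move: h; have := ltn_ord a; have := ltn_ord b; have := ltn_ord v;
  case: (leqP v a); case: (leqP v b); lia.
Qed.

Lemma dist_injr v : injective (fun c => dist c v).
Proof.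
move=> a b; rewrite /= !distE => h; apply/val_inj => /=.
by move: h; have := ltn_ord a; have := ltn_ord b; have := ltn_ord v;
  case: (leqP a v); case: (leqP b v); lia.
Qed.

End CircularDistance.

Ltac via a b c := have := dist_via a b c.
Ltac bound a b := have := dist_lt a b.

Lemma card_ord_range (n lo hi : nat) :
  hi < n -> #|[set j : 'I_n | lo < j <= hi]| = hi - lo.
Proof.
elim: hi => [|hi IH] hn.
  by rewrite (_ : [set j | _] = set0) ?cards0 //; apply/setP => j; rewrite !inE; lia.
case: (leqP lo hi) => hl; last first.
  have -> : [set j : 'I_n | lo < j <= hi.+1] = set0.
    by apply/setP => j; rewrite !inE; lia.
  by rewrite cards0; lia.
have -> : [set j : 'I_n | lo < j <= hi.+1] = Ordinal hn |: [set j : 'I_n | lo < j <= hi].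
  by apply/setP => j; rewrite !inE -val_eqE /=; lia.
by rewrite cardsU1 IH 1?ltnW // inE /= ltnn andbF; lia.
Qed.

Section Coordinates.
(* A coordinate is an injective map 'I_n -> nat with values below n, such as
   dist v or (fun c => dist c v); it is then a bijection onto [0, n). *)
Variables (n : nat) (f : 'I_n -> nat).
Hypotheses (f_inj : injective f) (f_lt : forall c, f c < n).

Let f_ord (c : 'I_n) : 'I_n := Ordinal (f_lt c).

Let f_ord_inj : injective f_ord.
Proof. by move=> a b /(congr1 val) /= /f_inj. Qed.

Lemma coord_onto k : k < n -> exists c, f c = k.
Proof.
move=> hk; have /codomP [c /(congr1 val) /= ->] :=
  inj_card_onto f_ord_inj (leqnn _) (Ordinal hk).
by exists c.
Qed.

Lemma card_coord_range (lo hi : nat) :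
  hi < n -> #|[set c | lo < f c <= hi]| = hi - lo.
Proof.
move=> hn; rewrite -(card_ord_range lo hn) -(card_imset _ f_ord_inj).
apply: eq_card => j; rewrite [in RHS]inE; apply/imsetP/idP.
  by case=> c; rewrite inE => hc ->.
move=> hj; have [c hc] := coord_onto (ltn_ord j).
by exists c; rewrite ?inE ?hc //; apply/val_inj; rewrite /= hc.
Qed.

Lemma initial_segment (S : {set 'I_n}) :
  (forall c, c \in S -> 0 < f c) ->
  (forall c c', c \in S -> 0 < f c' <= f c -> c' \in S) ->
  S = [set c | 0 < f c <= #|S|].
Proof.
move=> pos down; have [S0|S_gt0] := posnP #|S|.
  move/cards0_eq: (S0) => ->; apply/setP => c; rewrite !inE cards0; lia.
have [c0 c0S c0max] := eq_bigmax_cond f S_gt0.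
set r := \max_(c in S) f c in c0max.
have eqS : S = [set c | 0 < f c <= r].
  apply/setP => c; rewrite inE; apply/idP/andP.
    by move=> hc; rewrite pos // leq_bigmax_cond.
  by case=> h1 h2; apply: (down c0) => //; rewrite h1 -c0max.
suff -> : #|S| = r by [].
by rewrite {1}eqS card_coord_range ?subn0 // c0max.
Qed.

End Coordinates.

Definition out_nbhd n (E : rel 'I_n) (v : 'I_n) : {set 'I_n} := [set c | E v c].
Definition in_nbhd n (E : rel 'I_n) (u : 'I_n) : {set 'I_n} := [set a | E a u].

Definition open_arc n (v u : 'I_n) : {set 'I_n} := [set c | 0 < dist v c < dist v u].

Lemma card_open_arc n (v u : 'I_n) : v != u -> #|open_arc v u| = (dist v u).-1.
Proof.
move=> nvu; have := dist_gt0 nvu; have := dist_lt v u => h1 h2.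
have -> : open_arc v u = [set c | 0 < dist v c <= (dist v u).-1].
  by apply/setP => c; rewrite !inE; lia.
rewrite (card_coord_range (@dist_injl n v) (dist_lt v)); lia.
Qed.

Section IntervalDigraph.
Variables (n : nat) (E : rel 'I_n).
Hypothesis hE : cid2 E.
Implicit Types u v w a b c : 'I_n.

Lemma edge_neq u v : E u v -> u != v.
Proof. by case: hE => hl _ _; apply: contraTneq => ->; exact: hl. Qed.

Lemma edge_asym u v : E u v -> ~~ E v u.
Proof. by move=> h; case: hE => _ h2 _; have := h2 _ _ (edge_neq h); rewrite h. Qed.

Lemma edge_split_from u v w :
  E u w -> 0 < dist u v -> dist u v < dist u w -> E u v && E v w.
Proof.
move=> huw h1 h2; case: hE => _ _; apply => //.
have nuv : u != v by rewrite -dist_eq0 -lt0n.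
have nuw : u != w by rewrite -dist_eq0 -lt0n; lia.
have nvw : v != w by apply: contraTneq h2 => ->; rewrite ltnn.
by rewrite /cw nuv nvw nuw h2.
Qed.

Lemma edge_split_to u v w :
  E u w -> 0 < dist v w -> dist v w < dist u w -> E u v && E v w.
Proof.
move=> huw h1 h2; have nuv : u != v by apply: contraTneq h2 => ->; rewrite ltnn.
by apply: edge_split_from huw _ _; have := dist_gt0 nuv; via u v w; bound u v; lia.
Qed.

Lemma out_nbrs_adj a u v : E a u -> E a v -> u != v -> E u v || E v u.
Proof.
move=> hau hav nuv.
have hd : dist a u != dist a v by apply: contra nuv => /eqP/dist_injl ->.
case: (ltngtP (dist a u) (dist a v)) hd => // hlt _.
  by case/andP: (edge_split_from hav (dist_gt0 (edge_neq hau)) hlt) => _ ->.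
by case/andP: (edge_split_from hau (dist_gt0 (edge_neq hav)) hlt) => _ ->;
  rewrite orbT.
Qed.

Lemma in_nbrs_adj c u v : E u c -> E v c -> u != v -> E u v || E v u.
Proof.
move=> huc hvc nuv.
have hd : dist u c != dist v c by apply: contra nuv => /eqP/dist_injr ->.
case: (ltngtP (dist u c) (dist v c)) hd => // hlt _.
  by case/andP: (edge_split_to hvc (dist_gt0 (edge_neq huc)) hlt) => -> _;
    rewrite orbT.
by case/andP: (edge_split_to huc (dist_gt0 (edge_neq hvc)) hlt) => -> _.
Qed.

Lemma out_nbhd_arc v : out_nbhd E v = [set c | 0 < dist v c <= #|out_nbhd E v|].
Proof.
apply: (initial_segment (@dist_injl n v) (dist_lt v)) => [c|c c'].
  by rewrite inE => /edge_neq /dist_gt0.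
rewrite !inE => hc /andP[h1 h2].
case: (ltngtP (dist v c') (dist v c)) h2 => // [h _|/dist_injl -> //].
by case/andP: (edge_split_from hc h1 h).
Qed.

Lemma in_nbhd_arc u : in_nbhd E u = [set a | 0 < dist a u <= #|in_nbhd E u|].
Proof.
apply: (initial_segment (@dist_injr n u) (fun c => dist_lt c u)) => [c|c c'].
  by rewrite inE => /edge_neq /dist_gt0.
rewrite !inE => hc /andP[h1 h2].
case: (ltngtP (dist c' u) (dist c u)) h2 => // [h _|/(@dist_injr n u) -> //].
by case/andP: (edge_split_to hc h1 h).
Qed.

Lemma card_out_nbhd_le v k :
  k < n -> (forall c, E v c -> dist v c <= k) -> #|out_nbhd E v| <= k.
Proof.
move=> hk h; rewrite -[k]subn0 -(card_coord_range (@dist_injl n v) (dist_lt v) 0 hk).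
apply/subset_leq_card/subsetP => c; rewrite !inE => hc.
by rewrite dist_gt0 ?(edge_neq hc) ?h.
Qed.

Lemma card_in_nbhd_le u k :
  k < n -> (forall c, E c u -> dist c u <= k) -> #|in_nbhd E u| <= k.
Proof.
move=> hk h; rewrite -[k]subn0 -(card_coord_range (@dist_injr n u) (fun c => dist_lt c u) 0 hk).
apply/subset_leq_card/subsetP => c; rewrite !inE => hc.
by rewrite dist_gt0 ?(edge_neq hc) ?h.
Qed.

Lemma first_non_out v : #|out_nbhd E v|.+1 < n ->
  exists c, [/\ dist v c = #|out_nbhd E v|.+1, ~~ E v c & v != c].
Proof.
move=> h; have [c hc] := coord_onto (@dist_injl n v) (dist_lt v) h.
exists c; split => //; last by rewrite -dist_eq0 hc.
by have /setP/(_ c) := out_nbhd_arc v; rewrite !inE hc => ->; rewrite ltnn andbF.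
Qed.

Lemma first_non_in u : #|in_nbhd E u|.+1 < n ->
  exists c, [/\ dist c u = #|in_nbhd E u|.+1, ~~ E c u & c != u].
Proof.
move=> h; have [c hc] := coord_onto (@dist_injr n u) (fun c => dist_lt c u) h.
exists c; split => //; last by rewrite -dist_eq0 hc.
by have /setP/(_ c) := in_nbhd_arc u; rewrite !inE hc => ->; rewrite ltnn andbF.
Qed.

Lemma out_nbhd_sub_arc u v :
  u != v -> E v u = false -> out_nbhd E v \subset open_arc v u.
Proof.
move=> nuv evu; apply/subsetP => c; rewrite !inE => hc.
rewrite dist_gt0 ?(edge_neq hc) //=.
case: (ltngtP (dist v c) (dist v u)) => [//|h|/dist_injl e]; last by move: hc; rewrite e evu.
have nvu : v != u by rewrite eq_sym.
by case/andP: (edge_split_from hc (dist_gt0 nvu) h); rewrite evu.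
Qed.

Lemma in_nbhd_sub_arc u v :
  u != v -> E v u = false -> in_nbhd E u \subset open_arc v u.
Proof.
move=> nuv evu; apply/subsetP => c; rewrite !inE => hc.
have ncv : c != v by apply: contraTneq hc => ->; rewrite evu.
have ncu := edge_neq hc.
rewrite dist_gt0 1?eq_sym //=.
case: (ltngtP (dist v c) (dist v u)) => [//|h|/dist_injl e]; last first.
  by move: ncu; rewrite e eqxx.
(* u lies between v and c, so going from c to u one passes through v *)
have hvia : dist c v < dist c u.
  have nvu : v != u by rewrite eq_sym.
  have := dist_turn ncv; have := dist_turn ncu; have := dist_gt0 nvu.
  by via v u c; lia.
by case/andP: (edge_split_from hc (dist_gt0 ncv) hvia); rewrite evu.
Qed.

End IntervalDigraph.

Section AlphaBeta.
Variables (n : nat) (E : rel 'I_n).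
Implicit Types u v : 'I_n.

Lemma nonedge_sym u v : nonedge E u v = nonedge E v u.
Proof. by rewrite /nonedge eq_sym [~~ E u v && _]andbC. Qed.

Lemma betaG_ge u v : E u v -> dist u v <= betaG E.
Proof. by move=> h; apply: (leq_bigmax_cond (u, v)). Qed.

Lemma betaG_lt : 0 < n -> betaG E < n.
Proof.
move=> n_gt0; suff : betaG E <= n.-1 by lia.
by apply/bigmax_leqP => p _; rewrite -ltnS prednK // dist_lt.
Qed.

Lemma longest_edge u v : E u v -> exists a b, E a b /\ dist a b = betaG E.
Proof.
move=> h; have : 0 < #|[pred p : 'I_n * 'I_n | E p.1 p.2]| by apply/card_gt0P; exists (u, v).
by case/(eq_bigmax_cond (fun p => dist p.1 p.2)) => [[a b] hab e]; exists a, b.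
Qed.

Lemma alphaG_finite u v : nonedge E u v -> exists a, alphaG E = Some a.
Proof.
move=> h; rewrite /alphaG; case: ifP; first by eexists.
by move/negbT/existsPn/(_ (u, v)); rewrite h.
Qed.

Lemma alphaG_spec a : alphaG E = Some a ->
  (forall u v, nonedge E u v -> a <= dist u v) /\
  exists u v, nonedge E u v /\ dist u v = a.
Proof.
rewrite /alphaG -minEnat; case: ifP => // /existsP [[u0 v0] h0] [<-]; split.
  move=> u v h.
  exact: (bigmin_le_cond n (j := (u, v)) (P := fun p => nonedge E p.1 p.2)
            (fun p => dist p.1 p.2) h).
have [[u v] huv ->] := eq_bigmin (u0, v0) (fun p => nonedge E p.1 p.2)
  (fun p => dist p.1 p.2) h0
  (fun p _ => ltnW (dist_lt p.1 p.2)).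
by exists u, v.
Qed.

End AlphaBeta.

Lemma card_exchange (K : finType) (T T' G L : {set K}) :
  G \subset T' :\: T -> T :\: T' \subset L -> #|T| + #|G| <= #|T'| + #|L|.
Proof.
move=> /subset_leq_card hG /subset_leq_card hL.
by have := cardsID T' T; have := cardsID T T'; rewrite setIC; lia.
Qed.

Lemma card_symdiff (K : finType) (A B : {set K}) :
  #|A :\: B| + #|B :\: A| + 2 * #|A :&: B| = #|A| + #|B|.
Proof. by have := cardsID B A; have := cardsID A B; rewrite setIC; lia. Qed.

Definition p3set n (E : rel 'I_n) : {set 'I_n * 'I_n * 'I_n} :=
  [set t | [&& t.1.1 != t.1.2, t.1.2 != t.2, t.1.1 != t.2,
               E t.1.1 t.1.2, E t.1.2 t.2, ~~ E t.1.1 t.2 & ~~ E t.2 t.1.1]].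

Lemma P3E n (E : rel 'I_n) : P3 E = #|p3set E|.
Proof. by []. Qed.

Section Triples.
Variable n : nat.
Implicit Types (u v : 'I_n) (S W A B : {set 'I_n}).

(* Triples (u, w, v) with w in S: the candidate paths with ends u and v. *)
Definition through u S v := [set (u, w, v) | w in S].

(* Triples (u, v, c) with c in A and (a, u, v) with a in B: the candidate
   paths starting or ending with the pair u v. *)
Definition extending u v A B := [set (u, v, c) | c in A] :|: [set (a, u, v) | a in B].

Lemma card_through2 u v S W :
  u != v -> #|through u S v :|: through v W u| = #|S| + #|W|.
Proof.
move=> nuv; rewrite cardsU !card_imset; try by move=> ? ? [].
suff -> : through u S v :&: through v W u = set0 by rewrite cards0 subn0.
apply/setP => t; rewrite !inE; apply/andP => -[/imsetP[w _ ->] /imsetP[w' _ [e _ _]]].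
by rewrite e eqxx in nuv.
Qed.

Lemma card_extending u v A B : u != v -> #|extending u v A B| = #|A| + #|B|.
Proof.
move=> nuv; rewrite cardsU !card_imset; try by move=> ? ? [].
suff -> : [set (u, v, c) | c in A] :&: [set (a, u, v) | a in B] = set0
  by rewrite cards0 subn0.
apply/setP => t; rewrite !inE; apply/andP => -[/imsetP[c _ ->] /imsetP[a _ [_ e _]]].
by rewrite e eqxx in nuv.
Qed.

End Triples.

Definition del_edge n (E : rel 'I_n) (u v : 'I_n) : rel 'I_n :=
  fun a b => E a b && ~~ ((a == u) && (b == v)).

Definition add_edge n (E : rel 'I_n) (u v : 'I_n) : rel 'I_n :=
  fun a b => E a b || ((a == u) && (b == v)).

Section DeleteLongestEdge.
Variables (n : nat) (E : rel 'I_n) (u v : 'I_n).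
Hypotheses (hE : cid2 E) (huv : E u v) (hlong : dist u v = betaG E).

Let nuv : u != v := edge_neq hE huv.
Let evu : E v u = false := negbTE (edge_asym hE huv).

(* No edge spans a longest edge, so deleting it keeps the interval property. *)
Lemma del_edge_cid2 : cid2 (del_edge E u v).
Proof.
case: hE => hl h2 hi; split.
- by move=> a; rewrite /del_edge negb_and hl.
- move=> a b nab; rewrite /del_edge; apply/negP => /andP[/andP[h _] /andP[h' _]].
  by move: (h2 _ _ nab); rewrite h h'.
- move=> a b c habc; rewrite /del_edge => /andP[hac _].
  have /andP[hab hbc] := hi _ _ _ habc hac; rewrite hab hbc /=.
  case/and4P: habc => nab nbc nac hd; have hac_le := betaG_ge hac.
  by apply/andP; split; apply/negP => /andP[/eqP ea /eqP eb]; subst;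
    [rewrite hlong in hd | via a u v; bound a u; have := dist_gt0 nab]; lia.
Qed.

(* Deleting u v creates the induced paths u -> w -> v (w strictly between) and
   v -> w -> u (w in both neighbourhoods), and destroys only paths u -> v -> c
   and a -> u -> v with c, a outside the other neighbourhood. *)
Lemma del_edge_P3 :
  P3 E + (betaG E).-1 + 3 * #|out_nbhd E v :&: in_nbhd E u| <=
  P3 (del_edge E u v) + #|out_nbhd E v| + #|in_nbhd E u|.
Proof.
set X := out_nbhd E v; set Y := in_nbhd E u.
set S := [set w | 0 < dist u w <= (betaG E).-1].
have cS : #|S| = (betaG E).-1.
  rewrite (card_coord_range (@dist_injl n u) (dist_lt u)) ?subn0 //.
  by have := betaG_lt E (leq_ltn_trans (leq0n u) (ltn_ord u)); lia.
suff : P3 E + #|through u S v :|: through v (X :&: Y) u| <=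
       P3 (del_edge E u v) + #|extending u v (X :\: Y) (Y :\: X)|.
  by rewrite card_through2 // card_extending // cS; have := card_symdiff X Y; lia.
rewrite !P3E; apply: card_exchange; apply/subsetP.
- move=> t /setUP[] /imsetP[w hw ->]; move: hw; rewrite !inE.
    move=> hw; have /andP[h1 h2] : E u w && E w v by apply: (edge_split_from hE huv); lia.
    have n1 := edge_neq hE h1; have n2 := edge_neq hE h2.
    rewrite /del_edge h1 h2 huv evu eqxx (negbTE n1) (negbTE n2) (negbTE nuv) /=.
    by rewrite eq_sym (negbTE n1) eqxx.
  case/andP => h1 h2; have n1 := edge_neq hE h1; have n2 := edge_neq hE h2.
  rewrite /del_edge h1 h2 huv evu eqxx (negbTE n1) (negbTE n2) eq_sym (negbTE nuv) /=.
  by rewrite eqxx.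
- move=> [[a b] c]; rewrite !inE /= /del_edge.
  case/andP => /negP hn /and5P[nab nbc nac hab /and3P[hbc hac hca]].
  case: (boolP ((a == u) && (b == v))) => [/andP[/eqP ea /eqP eb]|h1].
    by subst; apply/orP; left; apply/imsetP; exists c; rewrite // !inE hbc hca.
  case: (boolP ((b == u) && (c == v))) => [/andP[/eqP ea /eqP eb]|h2].
    by subst; apply/orP; right; apply/imsetP; exists a; rewrite // !inE hab hca.
  by case: hn; rewrite nab nbc nac hab hbc h1 h2 (negbTE hac) (negbTE hca).
Qed.

Lemma del_edge_xi :
  (exists p q, nonedge E p q /\ dist p q < betaG E) -> 2 * betaG E <= n ->
  xi (del_edge E u v) < xi E.
Proof.
move=> [p [q [hpq hd]]] h2; apply/proper_card/properP; split.
  apply/subsetP => [[[a b] [c d]]]; rewrite !inE /= /del_edge /nonedge.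
  case/and3P => /andP[hab _] /and3P[ncd h1 h2'] hlt.
  rewrite hab ncd hlt /=; have := betaG_ge hab.
  case: (boolP (E c d)) h1 => hcd /=.
    by rewrite negbK => /andP[/eqP ec /eqP ed]; subst; rewrite hlong in hlt; lia.
  case: (boolP (E d c)) h2' => //= hdc; rewrite negbK => /andP[/eqP ed /eqP ec]; subst.
  by have := dist_turn nuv; lia.
exists ((u, v), (p, q)); first by rewrite !inE /= huv hpq hlong hd.
by rewrite !inE /= /del_edge !eqxx /= andbF.
Qed.

End DeleteLongestEdge.

Section AddShortestNonedge.
Variables (n : nat) (E : rel 'I_n) (u v : 'I_n).
Hypotheses (hE : cid2 E) (hne : nonedge E u v).
Hypothesis hshort : forall p q, nonedge E p q -> dist u v <= dist p q.

Let nuv : u != v. Proof. by case/and3P: hne. Qed.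
Let euv : E u v = false. Proof. by case/and3P: hne => _ /negbTE. Qed.
Let evu : E v u = false. Proof. by case/and3P: hne => _ _ /negbTE. Qed.

Lemma adj_below_alpha a b : a != b -> dist a b < dist u v -> E a b || E b a.
Proof.
move=> nab hd; apply/negPn/negP => hn.
suff /hshort : nonedge E a b by lia.
by move: hn; rewrite /nonedge nab negb_or.
Qed.

Lemma inside_shortest_nonedge c :
  0 < dist u c -> dist u c < dist u v -> E u c && E c v.
Proof.
move=> h1 h2.
have nuc : u != c by rewrite -dist_eq0 -lt0n.
have ncv : c != v by apply: contraTneq h2 => ->; rewrite ltnn.
have hcv : E c v.
  have /orP[//|hvc] := adj_below_alpha ncv (ltac:(via u c v; bound c v; lia)).
  suff : E v u by rewrite evu.
  apply: (proj1 (andP (edge_split_from hE hvc _ _)));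
    by have := dist_turn nuv; via v u c; bound u v; lia.
rewrite hcv andbT.
have /orP[//|hcu] := adj_below_alpha nuc (ltac:(lia)).
suff : E v u by rewrite evu.
apply: (proj2 (andP (edge_split_from hE hcu _ _)));
  by have := dist_turn nuc; have := dist_gt0 ncv; via u c v; bound u v; lia.
Qed.

Lemma out_shorter_than_alpha c : E u c -> dist u c < dist u v.
Proof.
move=> huc; case: (ltngtP (dist u c) (dist u v)) => [//|h|/dist_injl e].
  by case/andP: (edge_split_from hE huc (dist_gt0 nuv) h); rewrite euv.
by rewrite e euv in huc.
Qed.

Lemma add_edge_cid2 : cid2 (add_edge E u v).
Proof.
case: hE => hl h2 hi; split.
- by move=> a; rewrite /add_edge negb_or hl; apply/negP => /andP[/eqP -> /eqP e];
    move: nuv; rewrite e eqxx.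
- move=> a b nab; rewrite /add_edge; apply/negP.
  case=> /andP[/orP[h|/andP[/eqP ea /eqP eb]] /orP[h'|/andP[/eqP ea' /eqP eb']]].
  + by move: (h2 _ _ nab); rewrite h h'.
  + by move: h; rewrite ea' eb' evu.
  + by move: h'; rewrite ea eb evu.
  + by move: nuv; rewrite -ea eb' eqxx.
- move=> a b c habc; rewrite /add_edge => /orP[hac|/andP[/eqP ea /eqP ec]].
    by have /andP[-> ->] := hi _ _ _ habc hac.
  subst; case/and4P: habc => nab _ _ hd.
  by have /andP[-> ->] := inside_shortest_nonedge (dist_gt0 nab) hd.
Qed.

(* Adding u -> v creates the paths u -> v -> c and a -> u -> v with c, a
   outside the other neighbourhood, and destroys only paths u -> w -> v (w
   strictly between) and v -> w -> u (w in both neighbourhoods). *)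
Lemma add_edge_P3 :
  P3 E + #|out_nbhd E v| + #|in_nbhd E u| <=
  P3 (add_edge E u v) + (dist u v).-1 + 3 * #|out_nbhd E v :&: in_nbhd E u|.
Proof.
set X := out_nbhd E v; set Y := in_nbhd E u.
set S := [set w | 0 < dist u w <= (dist u v).-1].
have cS : #|S| = (dist u v).-1.
  rewrite (card_coord_range (@dist_injl n u) (dist_lt u)) ?subn0 //.
  by have := dist_lt u v; lia.
suff : P3 E + #|extending u v (X :\: Y) (Y :\: X)| <=
       P3 (add_edge E u v) + #|through u S v :|: through v (X :&: Y) u|.
  by rewrite card_through2 // card_extending // cS; have := card_symdiff X Y; lia.
rewrite !P3E; apply: card_exchange; apply/subsetP.
- move=> t /setUP[] /imsetP[c hc ->]; move: hc; rewrite !inE => /andP[h1 h2].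
    have nvc := edge_neq hE h2.
    have nuc : u != c by apply: contraTneq h2 => <-; rewrite evu.
    have euc : E u c = false.
      by apply/negP => h; have := in_nbrs_adj hE h h2 nuv; rewrite euv evu.
    rewrite /add_edge /= euv h2 euc (negbTE h1) nuv nvc nuc !eqxx /=.
    by rewrite (eq_sym c v) nvc (negbTE nuv) andbF.
  have nau := edge_neq hE h2.
  have nav : c != v by apply: contraTneq h2 => ->; rewrite evu.
  have eav : E c v = false.
    by apply/negP => h; have := out_nbrs_adj hE h2 h nuv; rewrite euv evu.
  rewrite /add_edge /= euv h2 eav (negbTE h1) nuv nav nau !eqxx /=.
  by rewrite (negbTE nau) (eq_sym v u) (negbTE nuv).
- move=> [[a b] c]; rewrite !inE /= /add_edge.
  case/andP => /negP hn /and5P[nab nbc nac hab /and3P[hbc hac hca]].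
  case: (boolP ((a == u) && (c == v))) => [/andP[/eqP ea /eqP eb]|h1].
    subst; apply/orP; left; apply/imsetP; exists b => //.
    by rewrite !inE (dist_gt0 nab) -ltnS (prednK (dist_gt0 nuv)) out_shorter_than_alpha.
  case: (boolP ((c == u) && (a == v))) => [/andP[/eqP ea /eqP eb]|h2].
    by subst; apply/orP; right; apply/imsetP; exists b; rewrite // !inE hab hbc.
  case: hn.
  by rewrite nab nbc nac hab hbc (negbTE h1) (negbTE h2) (negbTE hac) (negbTE hca).
Qed.

Lemma add_edge_xi : (exists p q, E p q /\ dist u v < dist p q) ->
  xi (add_edge E u v) < xi E.
Proof.
move=> [p [q [hpq hd]]]; apply/proper_card/properP; split.
  apply/subsetP => [[[a b] [c d]]]; rewrite !inE /= /add_edge /nonedge !negb_or.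
  case/and3P => hab /and3P[ncd /andP[h1 _] /andP[h2 _]] hlt.
  rewrite ncd h1 h2 hlt /= andbT.
  case/orP: hab => // /andP[/eqP ea /eqP eb]; subst.
  suff /hshort : nonedge E c d by lia.
  by rewrite /nonedge ncd h1 h2.
exists ((p, q), (u, v)); first by rewrite !inE /= hpq hne hd.
by rewrite !inE /= /add_edge /nonedge !eqxx /= !orbT /= !andbF.
Qed.

End AddShortestNonedge.

Section DirectedCycle.
Variable n : nat.
Hypothesis n_ge4 : 4 <= n.
Implicit Types a b : 'I_n.

Let n_gt0 : 0 < n. Proof. by apply: leq_trans n_ge4. Qed.

Definition succ a : 'I_n := Ordinal (ltn_pmod a.+1 n_gt0).

Lemma dist_succ a : dist a (succ a) = 1.
Proof.
rewrite distE /=; have := ltn_ord a.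
case: (ltngtP a.+1 n) => h1 h2; first by rewrite modn_small //; case: leqP; lia.
  by lia.
by rewrite h1 modnn; case: leqP; lia.
Qed.

Lemma dist1_succ a b : dist a b = 1 -> b = succ a.
Proof. by rewrite -(dist_succ a) => /dist_injl. Qed.

Definition cycle_rel : rel 'I_n := fun a b => dist a b == 1.

Lemma cycle_cid2 : cid2 cycle_rel.
Proof.
split.
- by move=> a; rewrite /cycle_rel dist_xx.
- move=> a b nab; rewrite /cycle_rel; apply/negP => /andP[/eqP h1 /eqP h2].
  by have := dist_turn nab; lia.
- move=> a b c /and4P[nab _ _ h] /eqP e.
  by have := dist_gt0 nab; lia.
Qed.

(* Every vertex a starts the induced path a -> succ a -> succ (succ a). *)
Lemma cycle_P3 : n <= P3 cycle_rel.
Proof.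
pose f a := (a, succ a, succ (succ a)).
have f_inj : injective f by move=> ? ? [].
rewrite P3E -{1}(card_ord n) -cardsT -(card_imset _ f_inj).
apply/subset_leq_card/subsetP => t /imsetP [a _ ->].
have d1 := dist_succ a; have d2 := dist_succ (succ a).
have d3 : dist a (succ (succ a)) = 2.
  by via a (succ a) (succ (succ a)); bound a (succ (succ a)); lia.
have n1 : a != succ a by rewrite -dist_eq0 d1.
have n2 : succ a != succ (succ a) by rewrite -dist_eq0 d2.
have n3 : a != succ (succ a) by rewrite -dist_eq0 d3.
have d4 := dist_turn n3.
by rewrite inE /= /cycle_rel n1 n2 n3 d1 d2 d3 /=; apply/eqP; lia.
Qed.

(* A 2-free circular interval digraph whose edges have length at most 1 is a
   subgraph of the directed cycle; if moreover some pair of consecutive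
   vertices u, succ u is non-adjacent, it misses two of the n induced paths
   of the cycle. *)
Lemma short_edges_P3 (E : rel 'I_n) u v :
  cid2 E -> betaG E <= 1 -> nonedge E u v -> dist u v = 1 -> P3 E <= n - 2.
Proof.
move=> hE hb hne huv.
(* p is the predecessor of u *)
have [p hp] := coord_onto (@dist_injr n u) (fun c => dist_lt c u) (ltnW (ltnW n_ge4) : 1 < n).
have np : p != u by rewrite -dist_eq0 hp.
have hvs : v = succ u := dist1_succ huv.
have hus : u = succ p := dist1_succ hp.
pose f a := (a, succ a, succ (succ a)).
have f_inj : injective f by move=> ? ? [].
have : p3set E \subset f @: (~: [set u; p]).
  apply/subsetP => [[[a b] c]]; rewrite inE /= => /and5P[nab nbc nac hab /and3P[hbc _ _]].
  have e1 : dist a b = 1 by have := dist_gt0 nab; have := betaG_ge hab; lia.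
  have e2 : dist b c = 1 by have := dist_gt0 nbc; have := betaG_ge hbc; lia.
  have eb := dist1_succ e1; have ec := dist1_succ e2; subst b c.
  apply/imsetP; exists a => //.
  rewrite !inE negb_or; apply/andP; split; apply/negP => /eqP ea; subst a.
    by move: hab hne; rewrite -hvs /nonedge => ->; rewrite andbF.
  by move: hbc hne; rewrite -hus -hvs /nonedge => ->; rewrite andbF.
move/subset_leq_card; rewrite card_imset // P3E.
by have := cardsC [set u; p]; rewrite cards2 (eq_sym u p) np card_ord /=; lia.
Qed.

End DirectedCycle.

Section Optimal.
Variables (n : nat) (E : rel 'I_n).
Hypotheses (n_ge4 : 4 <= n) (hopt : optimal E).

Let hE : cid2 E. Proof. by case: hopt. Qed.

(* An optimal digraph has at least as many induced paths as the cycle. *)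
Lemma optimal_P3_ge : n <= P3 E.
Proof.
by case: hopt => _ hmax _; apply: leq_trans (cycle_P3 n_ge4) (hmax _ (cycle_cid2 n_ge4)).
Qed.

Lemma optimal_has_path : exists a b c, [/\ E a b, E b c & nonedge E a c].
Proof.
have : 0 < #|p3set E| by rewrite -P3E; apply: leq_trans optimal_P3_ge; lia.
case/card_gt0P => [[[a b] c]]; rewrite inE /= => /and5P[_ _ nac hab /and3P[hbc hac hca]].
by exists a, b, c; rewrite /nonedge nac hac hca.
Qed.

Lemma optimal_alpha_finite : exists a, alphaG E = Some a.
Proof. by have [a [b [c [_ _ /alphaG_finite]]]] := optimal_has_path. Qed.

Lemma optimal_longest_edge : exists u v, E u v /\ dist u v = betaG E.
Proof. by have [a [b [c [hab _ _]]]] := optimal_has_path; exact: longest_edge hab. Qed.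

(* Among digraphs with the maximum number of induced paths E minimises xi, so
   a competitor with smaller xi has strictly fewer induced paths. *)
Lemma optimal_strict (E' : rel 'I_n) : cid2 E' -> xi E' < xi E -> P3 E' < P3 E.
Proof.
case: hopt => _ hmax hxi hE' hlt.
by rewrite ltn_neqAle hmax // andbT; apply: contraTneq hlt => /(hxi _ hE'); rewrite -leqNgt.
Qed.

Variable al : nat.
Hypothesis hal : alphaG E = Some al.

Lemma alpha_le u v : nonedge E u v -> al <= dist u v.
Proof. exact: (alphaG_spec hal).1. Qed.

Lemma alpha_attained : exists u v, nonedge E u v /\ dist u v = al.
Proof. exact: (alphaG_spec hal).2. Qed.

Lemma alpha_gt0 : 0 < al.
Proof. by have [u [v [/and3P[nuv _ _] <-]]] := alpha_attained; exact: dist_gt0. Qed.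

(* Both orientations of a shortest non-edge are non-edges, so alpha <= n / 2. *)
Lemma alpha_half : 2 * al <= n.
Proof.
have [u [v [h e]]] := alpha_attained; have /and3P[nuv _ _] := h.
by have := alpha_le (etrans (nonedge_sym E v u) h); have := dist_turn nuv; lia.
Qed.

(* The degenerate case alpha = 1 >= beta cannot happen: E would then have
   fewer induced paths than the cycle. *)
Lemma alpha_beta_nondegenerate : al = 1 -> betaG E <= 1 -> False.
Proof.
move=> a1 hb; have [u [v [h d]]] := alpha_attained.
by have := short_edges_P3 n_ge4 hE hb h (etrans d a1); have := optimal_P3_ge; lia.
Qed.

Lemma off_shortest_from x c :
  ~ on_shortest_nonedge E x -> nonedge E x c -> al < dist x c.
Proof.
move=> hx hxc; rewrite ltn_neqAle alpha_le // andbT; apply/eqP => e.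
by apply: hx; exists x, c; rewrite hal e /incident eqxx.
Qed.

Lemma off_shortest_to x c :
  ~ on_shortest_nonedge E x -> nonedge E c x -> al < dist c x.
Proof.
move=> hx hcx; rewrite ltn_neqAle alpha_le // andbT; apply/eqP => e.
by apply: hx; exists c, x; rewrite hal e /incident eqxx orbT.
Qed.

Lemma off_longest_from x c : ~ on_longest_edge E x -> E x c -> dist x c < betaG E.
Proof.
move=> hx hxc; rewrite ltn_neqAle betaG_ge // andbT; apply/eqP => e.
by apply: hx; exists x, c; rewrite hxc e /incident !eqxx.
Qed.

Lemma off_longest_to x c : ~ on_longest_edge E x -> E c x -> dist c x < betaG E.
Proof.
move=> hx hcx; rewrite ltn_neqAle betaG_ge // andbT; apply/eqP => e.
by apply: hx; exists c, x; rewrite hcx e /incident !eqxx orbT.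
Qed.

Section ShortestNonedge.
Variables u v : 'I_n.
Hypotheses (hne : nonedge E u v) (hd : dist u v = al).

Let nuv : u != v. Proof. by case/and3P: hne. Qed.
Let euv : E u v = false. Proof. by case/and3P: hne => _ /negbTE. Qed.
Let evu : E v u = false. Proof. by case/and3P: hne => _ _ /negbTE. Qed.
Let hshort p q : nonedge E p q -> dist u v <= dist p q.
Proof. by rewrite hd; exact: alpha_le. Qed.
Let dvu : dist v u = n - al. Proof. by have := dist_turn nuv; lia. Qed.

Local Notation x := #|out_nbhd E v|.
Local Notation y := #|in_nbhd E u|.
Local Notation w := #|out_nbhd E v :&: in_nbhd E u|.

(* Optimality against adding u -> v; the gain is strict when alpha < beta. *)
Lemma shortest_nonedge_P3 : x + y + (al < betaG E) <= al.-1 + 3 * w.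
Proof.
have hadd := add_edge_P3 hE hne; rewrite hd in hadd.
case: (ltnP al (betaG E)) => hlt; last first.
  by case: hopt => _ hmax _; have := hmax _ (add_edge_cid2 hE hne hshort); lia.
suff : P3 (add_edge E u v) < P3 E by lia.
apply: optimal_strict (add_edge_cid2 hE hne hshort) (add_edge_xi hne hshort _).
by have [p [q [hpq e]]] := optimal_longest_edge; exists p, q; rewrite hd e.
Qed.

(* The first non-out-neighbour of v and the first non-in-neighbour of u give
   non-edges, so both neighbourhoods have at least alpha - 1 vertices. *)
Lemma shortest_nonedge_out_ge : al <= x.+1.
Proof.
case: (ltnP x.+1 (dist v u)) => h; last by have := alpha_half; lia.
have [c [dc nvc nvc']] := first_non_out hE (ltn_trans h (dist_lt v u)).
suff /alpha_le : nonedge E v c by lia.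
rewrite /nonedge nvc' nvc /=; apply/negP => hcv.
have ncu : c != u by apply: contraTneq h => <-; rewrite -dc ltnn.
suff : E u v by rewrite euv.
apply: (proj2 (andP (edge_split_from hE hcv _ _)));
  by have := dist_turn nvc'; have := dist_gt0 ncu; via v c u; bound v u; lia.
Qed.

Lemma shortest_nonedge_in_ge : al <= y.+1.
Proof.
case: (ltnP y.+1 (dist v u)) => h; last by have := alpha_half; lia.
have [c [dc ncu ncu']] := first_non_in hE (ltn_trans h (dist_lt v u)).
suff /alpha_le : nonedge E c u by lia.
rewrite /nonedge ncu' ncu /=; apply/negP => huc.
suff : E u v by rewrite euv.
apply: (proj1 (andP (edge_split_from hE huc (dist_gt0 nuv) _))).
by have := dist_turn ncu'; lia.
Qed.

(* The two neighbourhoods are arcs inside the open arc from v to u, starting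
   at its two ends: if they are small they are disjoint, and if they are
   large they cover the whole arc. *)
Lemma shortest_nonedge_disjoint : x + y <= n - al - 1 -> w = 0.
Proof.
move=> h; apply/eqP; rewrite cards_eq0; apply/eqP/setP => c; rewrite inE in_set0.
apply/negP => /andP[hcv hcu].
have /subsetP/(_ c hcv) := out_nbhd_sub_arc hE nuv evu; rewrite inE => harc.
rewrite out_nbhd_arc // inE in hcv; rewrite in_nbhd_arc // inE in hcu.
by via v c u; lia.
Qed.

Lemma shortest_nonedge_cover : n - al <= x + y -> n - al - 1 + w <= x + y.
Proof.
move=> h; have nvu : v != u by rewrite eq_sym.
have := card_open_arc nvu; rewrite dvu => carc.
suff /subset_leq_card : open_arc v u \subset out_nbhd E v :|: in_nbhd E u.
  by have := subset_leq_card (subsetIl (out_nbhd E v) (in_nbhd E u)); rewrite cardsU; lia.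
apply/subsetP => c; rewrite inE => hc.
have ncu : c != u by apply: contraTneq hc => ->; rewrite ltnn andbF.
rewrite [in X in _ \in X :|: _]out_nbhd_arc // [in X in _ \in _ :|: X]in_nbhd_arc // !inE.
by have := dist_gt0 ncu; via v c u; lia.
Qed.

Lemma shortest_nonedge_bound kx ky : kx < n -> ky < n ->
  (forall c, E v c -> dist v c <= kx) -> (forall c, E c u -> dist c u <= ky) ->
  3 * n + (al < betaG E) <= 4 * al + 2 + 2 * (kx + ky).
Proof.
move=> kxn kyn hx hy.
have bx := card_out_nbhd_le hE kxn hx; have by_ := card_in_nbhd_le hE kyn hy.
have hP := shortest_nonedge_P3; have px := shortest_nonedge_out_ge.
have py := shortest_nonedge_in_ge; have a0 := alpha_gt0.
(* disjoint neighbourhoods would force the degenerate case alpha = 1 >= beta *)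
case: (leqP (x + y) (n - al - 1)) => hs.
  have w0 := shortest_nonedge_disjoint hs; rewrite w0 in hP.
  exfalso; apply: alpha_beta_nondegenerate;
    by case: (ltnP al (betaG E)) hP => hl; lia.
by have := shortest_nonedge_cover (ltac:(lia)); lia.
Qed.

End ShortestNonedge.

Section LongestEdge.
Variables u v : 'I_n.
Hypotheses (huv : E u v) (hlong : dist u v = betaG E).

Let nuv : u != v := edge_neq hE huv.
Let evu : E v u = false := negbTE (edge_asym hE huv).
Let dvu : dist v u = n - betaG E. Proof. by have := dist_turn nuv; lia. Qed.

Local Notation x := #|out_nbhd E v|.
Local Notation y := #|in_nbhd E u|.
Local Notation w := #|out_nbhd E v :&: in_nbhd E u|.

(* Optimality against deleting u -> v. *)
Lemma longest_edge_P3 : (betaG E).-1 + 3 * w <= x + y.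
Proof.
have := del_edge_P3 hE huv hlong.
by case: hopt => _ hmax _; have := hmax _ (del_edge_cid2 hE huv hlong); lia.
Qed.

(* Both neighbourhoods lie in the open arc from v to u. *)
Lemma longest_edge_arc : x + y <= n - betaG E - 1 + w.
Proof.
have nvu : v != u by rewrite eq_sym.
have := card_open_arc nvu; rewrite dvu => carc.
suff /subset_leq_card : out_nbhd E v :|: in_nbhd E u \subset open_arc v u.
  by have := subset_leq_card (subsetIl (out_nbhd E v) (in_nbhd E u)); rewrite cardsU; lia.
by rewrite subUset out_nbhd_sub_arc ?in_nbhd_sub_arc.
Qed.

Lemma longest_edge_beta_half : 2 * betaG E <= n.
Proof. by have := longest_edge_P3; have := longest_edge_arc; lia. Qed.

(* If alpha < beta, deleting u -> v decreases xi, so the inequality is strict. *)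
Lemma longest_edge_P3_strict : al < betaG E -> (betaG E).-1 + 3 * w < x + y.
Proof.
move=> hlt; have := del_edge_P3 hE huv hlong.
suff : P3 (del_edge E u v) < P3 E by lia.
apply: optimal_strict (del_edge_cid2 hE huv hlong) (del_edge_xi hE huv hlong _ _).
  by have [p [q [h e]]] := alpha_attained; exists p, q; rewrite e.
exact: longest_edge_beta_half.
Qed.

(* Unless a neighbourhood fills its part of the arc, the first vertex after it
   spans a non-edge, whose length is at least alpha (plus iv when the
   non-edges at v are known to be longer than alpha). *)
Lemma longest_edge_out_ge (iv : bool) :
  (forall c, nonedge E v c -> al + iv <= dist v c) ->
  x = n - betaG E - 1 \/ al + iv <= x.+1.
Proof.
move=> hv; have := subset_leq_card (out_nbhd_sub_arc hE nuv evu).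
rewrite card_open_arc 1?eq_sym // dvu => hx.
case: (ltnP x.+1 (dist v u)) => h; last by left; lia.
right; have [c [dc nvc nvc']] := first_non_out hE (ltn_trans h (dist_lt v u)).
rewrite -dc; apply: hv; rewrite /nonedge nvc' nvc /=.
by apply/negP => /betaG_ge; have := dist_turn nvc'; lia.
Qed.

Lemma longest_edge_in_ge (iu : bool) :
  (forall c, nonedge E c u -> al + iu <= dist c u) ->
  y = n - betaG E - 1 \/ al + iu <= y.+1.
Proof.
move=> hu; have := subset_leq_card (in_nbhd_sub_arc hE nuv evu).
rewrite card_open_arc 1?eq_sym // dvu => hy.
case: (ltnP y.+1 (dist v u)) => h; last by left; lia.
right; have [c [dc ncu ncu']] := first_non_in hE (ltn_trans h (dist_lt v u)).
rewrite -dc; apply: hu; rewrite /nonedge ncu' ncu /=.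
by apply/negP => /betaG_ge; have := dist_turn ncu'; lia.
Qed.

Lemma longest_edge_bound (iv iu : bool) :
  (forall c, nonedge E v c -> al + iv <= dist v c) ->
  (forall c, nonedge E c u -> al + iu <= dist c u) ->
  4 * (al + betaG E) + (al < betaG E) + 2 * (iv || iu) <= 3 * n + 2.
Proof.
move=> hv hu; have hP := longest_edge_P3; have ha := longest_edge_arc.
have px := longest_edge_out_ge hv; have py := longest_edge_in_ge hu.
have w1 := subset_leq_card (subsetIl (out_nbhd E v) (in_nbhd E u)).
case: (ltnP al (betaG E)) => hlt; last by lia.
by have := longest_edge_P3_strict hlt; lia.
Qed.

End LongestEdge.

Let beta_lt_n : betaG E < n.
Proof. by apply: betaG_lt; apply: leq_trans n_ge4. Qed.

Lemma alpha_beta_lower : 3 * n + (al < betaG E) <= 4 * (al + betaG E) + 2.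
Proof.
have [u [v [h d]]] := alpha_attained.
have := shortest_nonedge_bound h d beta_lt_n beta_lt_n
  (fun c hc => betaG_ge hc) (fun c hc => betaG_ge hc).
lia.
Qed.

Lemma alpha_beta_upper : 4 * (al + betaG E) + (al < betaG E) <= 3 * n + 2.
Proof.
have [u [v [huv hb]]] := optimal_longest_edge.
have := longest_edge_bound huv hb (iv := false) (iu := false).
by rewrite !addn0 => /(_ (@alpha_le v) (@alpha_le^~ u)); lia.
Qed.

Lemma alpha_beta_upper_strict :
  (exists z, on_longest_edge E z /\ ~ on_shortest_nonedge E z) ->
  4 * (al + betaG E) + (al < betaG E) <= 3 * n.
Proof.
case=> z [[u [v /and3P[huv /eqP hb hinc]]] hz].
have hv c : nonedge E v c -> al + (z == v) <= dist v c.
  case: eqP => [<-|_] hc; first by rewrite addn1; exact: off_shortest_from.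
  by rewrite addn0; exact: alpha_le.
have hu c : nonedge E c u -> al + (z == u) <= dist c u.
  case: eqP => [<-|_] hc; first by rewrite addn1; exact: off_shortest_to.
  by rewrite addn0; exact: alpha_le.
have := longest_edge_bound huv hb hv hu.
by move: hinc; rewrite /incident orbC => -> /=; lia.
Qed.

Lemma alpha_beta_lower_strict :
  (exists z, on_shortest_nonedge E z /\ ~ on_longest_edge E z) ->
  3 * n + (al < betaG E) <= 4 * (al + betaG E).
Proof.
case=> z [[u [v [hne hdu hinc]]] hz].
have hd : dist u v = al by move: hdu; rewrite hal => -[].
have /and3P[nuv _ _] := hne.
have hzz : (z == v) + (z == u) = 1.
  by move: hinc; rewrite /incident; case: (eqVneq z u) => [->|]; rewrite ?(negbTE nuv) //;
    case: (z == v).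
have kn k : betaG E - k < n by lia.
have := shortest_nonedge_bound hne hd (kn (z == v)) (kn (z == u)).
have hx c : E v c -> dist v c <= betaG E - (z == v).
  case: eqP => [<-|_] hc; last by rewrite subn0 betaG_ge.
  by have := off_longest_from hz hc; lia.
have hy c : E c u -> dist c u <= betaG E - (z == u).
  case: eqP => [<-|_] hc; last by rewrite subn0 betaG_ge.
  by have := off_longest_to hz hc; lia.
have b0 : 0 < betaG E.
  by have [p [q [hpq <-]]] := optimal_longest_edge; exact: dist_gt0 (edge_neq hE hpq).
by move=> /(_ hx hy); lia.
Qed.

End Optimal.

Import GRing.Theory Num.Theory.

Local Open Scope ring_scope.

Lemma lt_rat_slack (p q : nat) (d : bool) :
  (p + d <= q)%N -> (p%:R : rat) < q%:R + (~~ d : nat)%:R.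
Proof. by move=> h; rewrite -natrD ltr_nat; case: d h; lia. Qed.

Lemma quarter_bounds (n a b : nat) (P Q : Prop) :
  (3 * n + (a < b) <= 4 * (a + b) + 2)%N ->
  (4 * (a + b) + (a < b) <= 3 * n + 2)%N ->
  (P -> 4 * (a + b) + (a < b) <= 3 * n)%N ->
  (Q -> 3 * n + (a < b) <= 4 * (a + b))%N ->
  let s : rat := (a + b)%:R in
  let e : rat := (if (a < b)%N then 0 else 1)%N%:R in
  [/\ (3 * n)%:R / 4 - 1 / 2 - e / 4 < s,
      s < (3 * n)%:R / 4 + 1 / 2 + e / 4,
      P -> s < (3 * n)%:R / 4 + e / 4 &
      Q -> (3 * n)%:R / 4 - e / 4 < s].
Proof.
move=> lo up upP loQ s e.
have -> : e = (~~ (a < b)%N : nat)%:R by rewrite /e; case: (a < b)%N.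
rewrite {}/s; split; [move: lo | move: up | move/upP | move/loQ] => /lt_rat_slack;
  rewrite ?natrD ?natrM; lra.
Qed.

Theorem mainTheorem8 (n : nat) (E : rel 'I_n) :
  (4 <= n)%N -> optimal E ->
  exists a : nat, alphaG E = Some a /\
    let s : rat := (a + betaG E)%:R in
    let e : rat := (epsG E)%:R in
    [/\ (3 * n)%:R / 4 - 1 / 2 - e / 4 < s,
        s < (3 * n)%:R / 4 + 1 / 2 + e / 4,
        (exists x, on_longest_edge E x /\ ~ on_shortest_nonedge E x) ->
          s < (3 * n)%:R / 4 + e / 4 &
        (exists x, on_shortest_nonedge E x /\ ~ on_longest_edge E x) ->
          (3 * n)%:R / 4 - e / 4 < s].
Proof.
move=> n_ge4 hopt; have [a hal] := optimal_alpha_finite n_ge4 hopt.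
exists a; split => //; rewrite /epsG hal.
apply: quarter_bounds.
- exact: (alpha_beta_lower n_ge4 hopt hal).
- exact: (alpha_beta_upper n_ge4 hopt hal).
- exact: (alpha_beta_upper_strict n_ge4 hopt hal).
- exact: (alpha_beta_lower_strict n_ge4 hopt hal).
Qed.
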